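(* Let $D$ be a division ring, $A$ a finitely generated free abelian group, $D * A$ a crossed product, and $M$ a nonzero finitely generated $D * A$-module with $\mathrm{gk}(M)\ge 1$. Let $C<A$ be an infinite cyclic subgroup such that $M$ is $D * C$-torsion, and let $V$ be a carrier space of $\Delta^*(M)$. Then $V^\circ\cap C\neq\langle 1\rangle$.
   Context: A crossed product $D * A$ has $D$-basis $\{\bar a: a\in A\}$ with $\bar a_1\bar a_2=\tau(a_1,a_2)\overline{a_1a_2}$ ($\tau(a_1,a_2)\in D\setminus\{0\}$) and $\bar a d=\sigma_a(d)\bar a$ for automorphisms $\sigma_a$ of $D$. For $X\subseteq A$, $D * X$ is the set of elements whose support lies in $X$. $M$ is $D * C$-torsion if every element is annihilated by a nonzero element of $D * C$; $\mathrm{gk}$ is Gelfand–Kirillov dimension over $D$. Let $A^*=\mathrm{Hom}_{\mathbb Z}(A,\mathbb R)\cong\mathbb R^{\mathrm{rk}(A)}$. For $\phi\in A^*$ put $A(0,\phi)=\{a:\phi(a)\ge0\}$, $A(+,\phi)=\{a:\phi(a)>0\}$. For a finite generating set $\mathcal X$ of $M$, the trailing coefficient module is $TC_\phi(M)=\mathcal X(D * A(0,\phi))/\mathcal X(D * A(+,\phi))$, and $\Delta(M)=\{\phi\in A^*: TC_\phi(M)\neq0\}$ (independent of $\mathcal X$). A point $x$ of a subset $S\subseteq\mathbb R^n$ is regular if some neighborhood of $x$ in $S$ (intersection of $S$ with a ball centred at $x$) is an $m$-ball (intersection of a ball with an $m$-dimensional subspace) and no point of $S$ has this property for a larger $m$.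 $\Delta^*(M)$ is the Euclidean closure of the set of regular points of $\Delta(M)$; it is a closed rational polyhedron of dimension $\mathrm{gk}(M)$, and its carrier spaces are the linear spans of neighborhoods of its regular points. For a subspace $V\subseteq A^*$, $V^\circ=\{a\in A:\phi(a)=0\ \forall\phi\in V\}$. *)

From HB Require Import structures.
From mathcomp Require Import all_boot all_order all_algebra.
From mathcomp Require Import all_classical all_reals all_analysis.
Set Implicit Arguments. Unset Strict Implicit. Unset Printing Implicit Defensive.
Import Order.TTheory GRing.Theory Num.Theory.
Local Open Scope ring_scope.
Local Open Scope classical_set_scope.

(* The free abelian group A of rank n is 'rV[int]_n (written additively). *)
Notation grpA n := 'rV[int]_n.

Definition division_ring (D : unitRingType) : Prop :=
  forall x : D, x != 0 -> x \is a GRing.unit.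

Definition ring_automorphism (D : unitRingType) (f : D -> D) : Prop :=
  [/\ f 1 = 1, forall x y, f (x + y) = f x + f y,
      forall x y, f (x * y) = f x * f y & bijective f].

(* Crossed product data of D * A: ubar a ubar b = tau a b ubar (a+b) and
   ubar a d = sigma a d ubar a; the two last conditions are associativity
   of the crossed product. *)
Definition crossed_product_data (D : unitRingType) (n : nat)
  (sigma : grpA n -> D -> D) (tau : grpA n -> grpA n -> D) : Prop :=
  [/\ forall a, ring_automorphism (sigma a),
      forall a b, tau a b != 0,
      (* (ubar a ubar b) d = ubar a (ubar b d) *)
      forall a b d, tau a b * sigma (a + b) d = sigma a (sigma b d) * tau a b &
      (* (ubar a ubar b) ubar c = ubar a (ubar b ubar c) *)
      forall a b c, tau a b * tau (a + b) c = sigma a (tau b c) * tau a (b + c)].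

(* A (left, unital) D * A-module structure on the left D-module M is given by
   the actions g a : M -> M of the basis elements ubar a.  The identity of
   D * A is (tau 0 0)^-1 ubar 0. An element sum_a d_a ubar a acts by
   m |-> sum_a d_a *: g a m. *)
Definition crossed_module (D : unitRingType) (n : nat)
  (sigma : grpA n -> D -> D) (tau : grpA n -> grpA n -> D)
  (M : lmodType D) (g : grpA n -> M -> M) : Prop :=
  [/\ forall a x y, g a (x + y) = g a x + g a y,
      forall a d x, g a (d *: x) = sigma a d *: g a x,
      forall a b x, g a (g b x) = tau a b *: g (a + b) x &
      forall x, (tau 0 0)^-1 *: g 0 x = x].

Section Defs.
Variables (D : unitRingType) (n : nat) (M : lmodType D) (g : grpA n -> M -> M).

(* X (D * S) for a finite set X of elements of M and a subset S of A:
   the set of sums  sum_i d_i *: g a_i x_i  with a_i in S and x_i in X. *)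
Definition sub_span (X : seq M) (S : set (grpA n)) : set M :=
  [set m | exists s : seq (D * grpA n * M),
      (forall t, t \in s -> S t.1.2 /\ t.2 \in X) /\
      m = \sum_(t <- s) t.1.1 *: g t.1.2 t.2].

Definition fin_generates (X : seq M) : Prop := forall m, sub_span X setT m.

Definition finitely_generated : Prop := exists X, fin_generates X.

(* M is D * C-torsion: every element is annihilated by a nonzero element
   sum_(c in C) d_c ubar c of D * C (distinct support, some d_c nonzero). *)
Definition torsion_over (C : set (grpA n)) : Prop :=
  forall m : M, exists s : seq (grpA n * D),
    [/\ uniq (map fst s), (forall t, t \in s -> C t.1),
        has (fun t => t.2 != 0) s &
        \sum_(t <- s) t.2 *: g t.1 m = 0].

Definition D_free (s : seq M) : Prop :=
  forall c : seq D, size c = size s ->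
    \sum_(i < size s) c`_i *: s`_i = 0 -> forall i, c`_i = 0.

Variable R : realType.

Definition dimD (P : set M) : \bar R :=
  ereal_sup [set ((size s)%:R)%:E | s in [set s : seq M |
                 (forall x, x \in s -> P x) /\ D_free s]].

Definition sumset (F : seq (grpA n)) (k : nat) : set (grpA n) :=
  [set a | exists s : seq (grpA n),
     size s = k /\ (forall b, b \in s -> b \in 0 :: F) /\ a = \sum_(b <- s) b].

(* Gelfand-Kirillov dimension over D: sup over finite subsets X of M and
   finite-dimensional D-subspaces V = D-span{ubar a : a in 0::F} of D * A of
   limsup_k log dim_D (X V^k) / log k  (note X V^k = X (D * sumset F k)). *)
Definition gk : \bar R :=
  ereal_sup [set l | exists (X : seq M) (F : seq (grpA n)),
     l = limn_esup (fun k : nat =>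
       ((ln (fine (dimD (sub_span X (sumset F k)))) / ln (k%:R)) : R)%:E)].

(* A^* = Hom(A, R), identified with R^n = 'rV[R]_n via the standard basis *)
Definition evalA (phi : 'rV[R]_n) (a : grpA n) : R :=
  \sum_(i < n) phi 0 i * (a 0 i)%:~R.

Definition A0 (phi : 'rV[R]_n) : set (grpA n) := [set a | 0 <= evalA phi a].
Definition Aplus (phi : 'rV[R]_n) : set (grpA n) := [set a | 0 < evalA phi a].

(* Delta(M) w.r.t. the finite generating set X:  TC_phi(M) <> 0, i.e.
   X (D * A(0,phi)) is not contained in X (D * A(+,phi)). *)
Definition Delta (X : seq M) : set 'rV[R]_n :=
  [set phi | exists m, sub_span X (A0 phi) m /\ ~ sub_span X (Aplus phi) m].
End Defs.

Section Geometry.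
Variables (R : realType) (n : nat).
Implicit Types (S : set 'rV[R]_n) (x y : 'rV[R]_n).

Definition sqdist x y : R := \sum_(i < n) (x 0 i - y 0 i) ^+ 2.

Definition mball_with S x (e : R) (m : nat) : Prop :=
  exists U : 'M[R]_n, (\rank U = m)%N /\
    (forall y, sqdist y x < e ^+ 2 -> (S y <-> (y <= U)%MS)).

Definition mball_at S x (m : nat) : Prop :=
  exists2 e : R, 0 < e & mball_with S x e m.

Definition maximal_dim S (m : nat) : Prop :=
  forall y m', S y -> mball_at S y m' -> (m' <= m)%N.

Definition regular S x : Prop :=
  S x /\ exists m, mball_at S x m /\ maximal_dim S m.

Definition eclosure S : set 'rV[R]_n :=
  [set x | forall e : R, 0 < e -> exists y, S y /\ sqdist y x < e ^+ 2].

Definition is_span (P : set 'rV[R]_n) (V : 'M[R]_n) : Prop :=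
  (forall y, P y -> (y <= V)%MS) /\
  (forall W : 'M[R]_n, (forall y, P y -> (y <= W)%MS) -> (V <= W)%MS).

Definition carrier_space S (V : 'M[R]_n) : Prop :=
  exists x (e : R) (m : nat),
    [/\ S x, 0 < e, mball_with S x e m, maximal_dim S m &
        is_span [set y | S y /\ sqdist y x < e ^+ 2] V].
End Geometry.

Definition Delta_star (D : unitRingType) (n : nat) (M : lmodType D)
  (g : grpA n -> M -> M) (R : realType) (X : seq M) : set 'rV[R]_n :=
  eclosure (regular (@Delta D n M g R X)).

Definition cyclic_sub (n : nat) (c0 : grpA n) : set (grpA n) :=
  [set a | exists k : int, a = c0 *~ k].

From Pilot Require Import Defs.
From HB Require Import structures.
From mathcomp Require Import all_boot all_order all_algebra.
From mathcomp Require Import all_classical all_reals all_analysis.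
Set Implicit Arguments. Unset Strict Implicit.
Import Order.TTheory GRing.Theory Num.Theory.
Local Open Scope ring_scope.
Local Open Scope classical_set_scope.

(* If phi(c0) <> 0 then phi is injective on C = <c0>.  Given m in M and an
   annihilator sum_c d_c ubar_c of m in D * C, the support point c with least
   phi-value is unique, so acting by ubar_(-c) expresses m through the
   ubar_(c' - c) m with phi(c' - c) > 0.  Hence X(D * A(0,phi)) lies in
   X(D * A(+,phi)), so TC_phi(M) = 0: every phi in Delta(M) kills c0.  This
   linear condition passes to the closure Delta^*(M) and to the spans of its
   subsets, so every carrier space V satisfies c0 in V^o. *)

Lemma uniq_map_inj_in (T1 T2 : eqType) (f : T1 -> T2) (s : seq T1) :
  uniq (map f s) -> {in s &, injective f}.
Proof.
elim: s => //= z s IH /andP[zNfs us] x y; rewrite !inE.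
case/orP=> [/eqP->|xs]; case/orP=> [/eqP->|ys] // fxy.
- by move: zNfs; rewrite fxy (map_f f ys).
- by move: zNfs; rewrite -fxy (map_f f xs).
- exact: IH.
Qed.

Lemma seq_argmin (T : eqType) d (O : orderType d) (f : T -> O) (s : seq T) :
  s != [::] -> exists2 t, t \in s & forall u, u \in s -> (f t <= f u)%O.
Proof.
elim: s => // z s IH _; have [->|sN0] := eqVneq s [::].
  by exists z; rewrite ?mem_head // => u; rewrite inE => /eqP->.
have [t ts t_min] := IH sN0; have [ft_le|ft_lt] := leP (f z) (f t).
  exists z; rewrite ?mem_head // => u; rewrite inE => /orP[/eqP->//|us].
  exact: le_trans ft_le (t_min u us).
exists t; first by rewrite inE ts orbT.
by move=> u; rewrite inE => /orP[/eqP->|/t_min//]; apply: ltW.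
Qed.

Section Evaluation.
Variables (R : realType) (n : nat) (phi : 'rV[R]_n).

Lemma evalA_is_zmod_morphism : GRing.zmod_morphism (evalA phi).
Proof.
move=> a b; rewrite /evalA -sumrB.
by apply: eq_bigr => i _; rewrite !mxE intrB mulrBr.
Qed.

HB.instance Definition _ :=
  GRing.isZmodMorphism.Build _ _ (evalA phi) evalA_is_zmod_morphism.

Lemma evalA_cyclic_inj (c0 a b : grpA n) :
  evalA phi c0 != 0 -> cyclic_sub c0 a -> cyclic_sub c0 b ->
  evalA phi a = evalA phi b -> a = b.
Proof.
move=> phi_c0 [k ak] [l bl]; subst a b.
rewrite (raddfMz (evalA phi) k c0) (raddfMz (evalA phi) l c0).
rewrite -(mulrzl (evalA phi c0) k) -(mulrzl (evalA phi c0) l) => /eqP.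
rewrite -subr_eq0 -mulrBl mulf_eq0 (negbTE phi_c0) orbF subr_eq0 eqr_int.
by move=> /eqP kl; congr (c0 *~ _).
Qed.

Definition int_col (a : grpA n) : 'cV[R]_n := \col_i (a 0 i)%:~R.

Lemma evalA_mulmx a : evalA phi a = (phi *m int_col a) 0 0.
Proof. by rewrite mxE; apply: eq_bigr => i _; rewrite mxE. Qed.

End Evaluation.

Lemma sqdist_coord_lt (R : realType) n (y z : 'rV[R]_n) (e : R) i :
  0 < e -> sqdist z y < e ^+ 2 -> `|z 0 i - y 0 i| < e.
Proof.
move=> e_gt0 zy; rewrite -(ltr_pXn2r (ltn0Sn 1)) ?nnegrE ?normr_ge0 ?ltW //.
rewrite real_normK ?num_real //.
apply: le_lt_trans zy; rewrite /sqdist (bigD1 i) //= lerDl.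
by apply: sumr_ge0 => j _; apply: sqr_ge0.
Qed.

Lemma eclosure_mulmx_eq0 (R : realType) n (P : set 'rV[R]_n) (w : 'cV[R]_n) y :
  (forall z, P z -> (z *m w) 0 0 = 0) -> eclosure P y -> (y *m w) 0 0 = 0.
Proof.
move=> Pw y_cl; apply/eqP; apply: contraT => yw_neq0.
set K := \sum_i `|w i 0|; set e := `|(y *m w) 0 0| / (K + 1).
have K_ge0 : 0 <= K by apply: sumr_ge0.
have e_gt0 : 0 < e by rewrite divr_gt0 ?normr_gt0 ?ltr_wpDl.
have [z [Pz zy]] := y_cl e e_gt0.
have : `|(z *m w) 0 0 - (y *m w) 0 0| <= e * K.
  rewrite !mxE -sumrB; apply: le_trans (ler_norm_sum _ _ _) _.
  rewrite mulr_sumr; apply: ler_sum => i _; rewrite -mulrBl normrM.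
  by rewrite ler_wpM2r // ltW // sqdist_coord_lt.
rewrite Pw // sub0r normrN => le_eK.
suff : e * K < `|(y *m w) 0 0| by rewrite ltNge le_eK.
by rewrite /e mulrAC ltr_pdivrMr ?ltr_wpDl // ltr_pM2l ?normr_gt0 // ltrDl.
Qed.

Lemma ring_automorphism_neq0 (D : unitRingType) (f : D -> D) d :
  ring_automorphism f -> d != 0 -> f d != 0.
Proof.
case=> _ fD _ [f' fK _] d_neq0; apply: contra d_neq0 => /eqP fd0.
have f0 : f 0 = 0 by apply: (@addrI _ (f 0)); rewrite -fD !addr0.
by apply/eqP; rewrite -(fK d) fd0 -{1}f0 fK.
Qed.

Section SubSpan.
Variables (D : unitRingType) (n : nat) (M : lmodType D) (g : grpA n -> M -> M).
Variables (X : seq M) (S : set (grpA n)).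

Lemma sub_span0 : Defs.sub_span g X S 0.
Proof. by exists [::]; rewrite big_nil. Qed.

Lemma sub_spanD m1 m2 :
  Defs.sub_span g X S m1 -> Defs.sub_span g X S m2 -> Defs.sub_span g X S (m1 + m2).
Proof.
move=> [s1 [s1_sub ->]] [s2 [s2_sub ->]]; exists (s1 ++ s2); rewrite big_cat.
by split=> // t; rewrite mem_cat => /orP[/s1_sub|/s2_sub].
Qed.

Lemma sub_spanZ d m : Defs.sub_span g X S m -> Defs.sub_span g X S (d *: m).
Proof.
move=> [s [s_sub ->]]; exists [seq ((d * t.1.1, t.1.2), t.2) | t <- s]; split.
  by move=> _ /mapP[t ts ->] /=; apply: s_sub.
by rewrite big_map scaler_sumr; apply: eq_bigr => t _; rewrite scalerA.
Qed.

End SubSpan.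

Section CrossedModule.
Variables (D : unitRingType) (n : nat).
Variables (sigma : grpA n -> D -> D) (tau : grpA n -> grpA n -> D).
Variables (M : lmodType D) (g : grpA n -> M -> M).
Hypothesis g_module : crossed_module sigma tau g.

Lemma crossed_module0 a : g a 0 = 0.
Proof.
have [gD _ _ _] := g_module.
by apply: (@addrI _ (g a 0)); rewrite -gD !addr0.
Qed.

Lemma crossed_module_sum (I : Type) (s : seq I) (c : I -> D) (b : I -> grpA n) a x :
  g a (\sum_(i <- s) c i *: g (b i) x) =
  \sum_(i <- s) (sigma a (c i) * tau a (b i)) *: g (a + b i) x.
Proof.
have [gD gZ gg _] := g_module.
elim: s => [|i s IH]; first by rewrite !big_nil crossed_module0.
by rewrite !big_cons gD gZ gg scalerA IH.
Qed.

Hypotheses (D_div : division_ring D) (cp : crossed_product_data sigma tau).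

Lemma crossed_module_unit x : g 0 x = tau 0 0 *: x.
Proof.
have [_ tau_neq0 _ _] := cp; have [_ _ _ g1] := g_module.
by rewrite -{2}(g1 x) scalerA mulrV ?scale1r ?D_div.
Qed.

(* Act by ubar (-a0): the a0-term becomes a unit multiple of x. *)
Lemma relation_solve (a0 : grpA n) (d0 : D) (s : seq (grpA n * D)) x :
  d0 != 0 -> d0 *: g a0 x + \sum_(t <- s) t.2 *: g t.1 x = 0 ->
  exists e : grpA n * D -> D, x = \sum_(t <- s) e t *: g (t.1 - a0) x.
Proof.
move=> d0_neq0 rel; have [gD gZ gg _] := g_module; have [aut tau_neq0 _ _] := cp.
set u := sigma (- a0) d0 * tau (- a0) a0 * tau 0 0.
have u_unit : u \is a GRing.unit.
  by rewrite !unitrMl ?D_div ?ring_automorphism_neq0.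
have x_eq : x = - u^-1 *:
    \sum_(t <- s) (sigma (- a0) t.2 * tau (- a0) t.1) *: g (- a0 + t.1) x.
  have := congr1 (g (- a0)) rel.
  rewrite crossed_module0 gD gZ gg addNr crossed_module_unit crossed_module_sum.
  rewrite !scalerA -/u => /(congr1 (fun m => u^-1 *: m)).
  rewrite scalerDr scalerA mulVr // scale1r scaler0 => /eqP.
  by rewrite addr_eq0 -scaleNr => /eqP.
exists (fun t => - u^-1 * (sigma (- a0) t.2 * tau (- a0) t.1)).
rewrite {1}x_eq scaler_sumr; apply: eq_bigr => t _.
by rewrite scalerA [- a0 + _]addrC.
Qed.

End CrossedModule.

Section Torsion.
Variables (D : unitRingType) (n : nat).
Variables (sigma : grpA n -> D -> D) (tau : grpA n -> grpA n -> D).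
Variables (M : lmodType D) (g : grpA n -> M -> M) (R : realType) (c0 : grpA n).
Hypotheses (D_div : division_ring D) (cp : crossed_product_data sigma tau).
Hypothesis g_module : crossed_module sigma tau g.
Hypothesis tors : torsion_over g (cyclic_sub c0).

Section NonvanishingAtC0.
Variable phi : 'rV[R]_n.
Hypothesis phi_c0 : evalA phi c0 != 0.

(* phi is injective on the cyclic group, so the minimum of phi over the
   support of an annihilator is attained exactly once. *)
Lemma torsion_min_relation x : exists a0 d0 (s : seq (grpA n * D)),
  [/\ d0 != 0, forall t, t \in s -> evalA phi a0 < evalA phi t.1 &
      d0 *: g a0 x + \sum_(t <- s) t.2 *: g t.1 x = 0].
Proof.
have [s [s_uniq s_C s_nz s_ann]] := tors x.
set s' := [seq t <- s | t.2 != 0].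
have s'_sub : {subset s' <= s} := mem_subseq (filter_subseq _ _).
have s'_uniq : uniq (map fst s') :=
  subseq_uniq (map_subseq _ (filter_subseq _ _)) s_uniq.
have s'_ann : \sum_(t <- s') t.2 *: g t.1 x = 0.
  rewrite big_filter big_mkcond -[RHS]s_ann; apply: eq_bigr => t _.
  by case: ifPn => // /negbNE/eqP->; rewrite scale0r.
have s'_nil : s' != [::] by rewrite -has_filter.
have [[a0 d0] t0_s' t0_min] := seq_argmin (fun t => evalA phi t.1) s'_nil.
exists a0, d0, (rem (a0, d0) s'); split.
- by move: t0_s'; rewrite mem_filter => /andP[].
- move=> t; rewrite mem_rem_uniq ?(map_uniq s'_uniq) // inE => /andP[t_neq t_s'].
  rewrite lt_def t0_min // andbT; apply: contra t_neq => /eqP phi_eq.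
  apply/eqP; apply: (uniq_map_inj_in s'_uniq) => //.
  by apply: (evalA_cyclic_inj phi_c0) => //; apply: s_C; apply: s'_sub.
- by rewrite -[RHS]s'_ann (perm_big _ (perm_to_rem t0_s')) big_cons.
Qed.

Lemma torsion_positive_shift x : exists L : seq (D * grpA n),
  (forall u, u \in L -> Aplus phi u.2) /\ x = \sum_(u <- L) u.1 *: g u.2 x.
Proof.
have [a0 [d0 [s [d0_neq0 a0_min rel]]]] := torsion_min_relation x.
have [e x_eq] := relation_solve g_module D_div cp d0_neq0 rel.
exists [seq (e t, t.1 - a0) | t <- s]; rewrite big_map; split=> // _ /mapP[t ts ->].
by rewrite /Aplus /= (raddfB (evalA phi)) subr_gt0 a0_min.
Qed.

Lemma sub_span_A0_Aplus X m :
  Defs.sub_span g X (A0 phi) m -> Defs.sub_span g X (Aplus phi) m.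
Proof.
case=> s [s_sub ->]; elim: s s_sub => [|t s IH] s_sub.
  by rewrite big_nil; apply: sub_span0.
rewrite big_cons; apply: sub_spanD.
  have [t_A0 t_X] := s_sub t (mem_head _ _); apply: sub_spanZ.
  have [L [L_pos ->]] := torsion_positive_shift t.2.
  rewrite (crossed_module_sum g_module).
  exists [seq ((sigma t.1.2 u.1 * tau t.1.2 u.2, t.1.2 + u.2), t.2) | u <- L].
  rewrite big_map; split=> // _ /mapP[u uL ->]; split=> //=.
  by rewrite /Aplus /= (raddfD (evalA phi)); apply: ltr_wpDl t_A0 (L_pos u uL).
by apply: IH => u us; apply: s_sub; rewrite inE us orbT.
Qed.

Lemma not_Delta X : ~ Delta g X phi.
Proof. by case=> m [m_A0]; apply; apply: sub_span_A0_Aplus. Qed.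

End NonvanishingAtC0.

Lemma Delta_evalA_eq0 X (phi : 'rV[R]_n) : Delta g X phi -> evalA phi c0 = 0.
Proof.
by move=> phi_Delta; apply/eqP; apply: contraT => /not_Delta/(_ X phi_Delta).
Qed.

End Torsion.

Unset Implicit Arguments. Set Strict Implicit.
Theorem lemma4p6 (D : unitRingType) (n : nat)
  (sigma : grpA n -> D -> D) (tau : grpA n -> grpA n -> D)
  (M : lmodType D) (g : grpA n -> M -> M) (R : realType)
  (X : seq M) (c0 : grpA n) (V : 'M[R]_n) :
  division_ring D ->
  crossed_product_data sigma tau ->
  crossed_module sigma tau g ->
  (exists m : M, m != 0) ->
  fin_generates g X ->
  (1 <= gk g R)%E ->
  c0 != 0 ->
  torsion_over g (cyclic_sub c0) ->
  carrier_space (@Delta_star D n M g R X) V ->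
  exists a : grpA n,
    [/\ cyclic_sub c0 a, a != 0 &
        forall phi : 'rV[R]_n, (phi <= V)%MS -> evalA phi a = 0].
Proof.
move=> D_div cp g_module _ _ _ c0_neq0 tors [x [e [_ [_ _ _ _ [_ V_min]]]]].
have Delta_star_ker y : Delta_star g X y -> (y *m int_col R c0) 0 0 = 0.
  apply: eclosure_mulmx_eq0 => z [z_Delta _]; rewrite -evalA_mulmx.
  exact: Delta_evalA_eq0 D_div cp g_module tors X z z_Delta.
have V_ker : (V <= kermx (int_col R c0))%MS.
  apply: V_min => y [/Delta_star_ker y_ker _].
  by rewrite sub_kermx; apply/eqP/matrixP => i j; rewrite (ord1 i) (ord1 j) y_ker mxE.
exists c0; split=> //; first by exists 1; rewrite mulr1z.
move=> phi /submx_trans/(_ V_ker); rewrite sub_kermx evalA_mulmx => /eqP->.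
by rewrite mxE.
Qed.
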